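(* There is an absolute constant $c>0$ such that the following holds. Let $p$ be a prime and let $f_1, f_2:\mathbb F_p \to\mathbb C$. Define $F:\mathbb F_p\to\mathbb C$ by $$F(x) =\frac 1p \sum_{y\in\mathbb F_p} f_1 (x+y)\, f_2 (x+y^2).$$ Then $$\big\Vert F-\mathbb E[f_1]\cdot \mathbb E[f_2]\big\Vert_2 \leq c\,p^{-\frac 1{10}} \Vert f_1\Vert_2 \cdot \Vert f_2\Vert_2 .$$
   Context: For $f:\mathbb F_p\to\mathbb C$, $\mathbb E[f]=\frac1p\sum_{x\in\mathbb F_p} f(x)$ and $\Vert f\Vert_2=\big(\frac1p\sum_{x\in\mathbb F_p}|f(x)|^2\big)^{1/2}$ (normalized counting measure). In $F-\mathbb E[f_1]\cdot\mathbb E[f_2]$, the product $\mathbb E[f_1]\mathbb E[f_2]$ denotes the constant function. *)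

From mathcomp Require Import all_boot all_algebra.
From mathcomp Require Import reals.
From mathcomp.real_closed Require Import complex.
Import GRing.Theory Num.Theory.
Local Open Scope ring_scope.
Local Open Scope complex_scope.

Set Implicit Arguments. Unset Strict Implicit. Unset Printing Implicit Defensive.

Definition expect (R : realType) (p : nat) (f : 'F_p -> R[i]) : R[i] :=
  (p%:R)^-1 * \sum_(x : 'F_p) f x.

Definition l2norm (R : realType) (p : nat) (f : 'F_p -> R[i]) : R :=
  Num.sqrt ((p%:R)^-1 * \sum_(x : 'F_p) (ComplexField.Normc.normc (f x)) ^+ 2).

Definition Fop (R : realType) (p : nat) (f1 f2 : 'F_p -> R[i]) (x : 'F_p) : R[i] :=
  (p%:R)^-1 * \sum_(y : 'F_p) f1 (x + y) * f2 (x + y ^+ 2).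

From mathcomp Require Import all_boot all_order all_algebra.
From mathcomp Require Import reals exp.
From mathcomp.real_closed Require Import complex.
From mathcomp Require Import ring lra.
Import Order.TTheory GRing.Theory Num.Theory ComplexField.Normc.
Local Open Scope ring_scope.
Local Open Scope complex_scope.
Set Implicit Arguments. Unset Strict Implicit. Unset Printing Implicit Defensive.

(* Expanding f1 and f2 - E[f2] in an additive character psi of F_p, the function
   F - E[f1] E[f2] becomes the Fourier series with coefficients
     C(z) = sum_x A(z - x) B(x) S(x, z - x),
   where A and B are the Fourier transforms (so B(0) = 0) and
   S(a, b) = E_u psi(a u^2 + b u) is a normalised quadratic Gauss sum; by Parseval
   it suffices to bound sum_z |C(z)|^2.  Expanding the square gives sum_d T(d) with
   T(0) <= |A|^2 |B|^2 / p.  For d <> 0, Cauchy-Schwarz in u and then in (x, y)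
   bounds |T(d)|^4 by the squared autocorrelations of |A|^2 and |B|^2 at d times a
   Gram sum of products of four Gauss sums.  Completing the squares turns each such
   product into a single Gauss sum in u, of size p^(-3/2) off the diagonal x = y and
   p^(-1) on it, so the Gram sum is at most 2/p.  Summing over d with Cauchy-Schwarz
   once more gives
     ||F - E[f1] E[f2]||_2^2 <= (1/p + (2/p)^(1/4)) ||f1||_2^2 ||f2||_2^2
   for odd p, better than the required p^(-1/5).  For p = 2, where squares cannot be
   completed, the trivial bound |S| <= 1 suffices. *)

Section ComplexSums.
Variable R : rcfType.
Local Notation C := R[i].

Lemma normc_ge0 (z : C) : 0 <= normc z.
Proof. by case: z => a b; exact: sqrtr_ge0. Qed.

Lemma sqr_normc (z : C) : (normc z ^+ 2)%:C = z * conjc z.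
Proof.
case: z => a b; rewrite /normc sqr_sqrtr ?addr_ge0 ?sqr_ge0 //.
by apply/eqP; rewrite eq_complex /=; apply/andP; split; apply/eqP; ring.
Qed.

Lemma normc_conj (z : C) : normc (conjc z) = normc z.
Proof. by case: z => a b; rewrite /normc /= sqrrN. Qed.

Lemma normc_real (r : R) : 0 <= r -> normc r%:C = r.
Proof. by move=> r0; rewrite /normc /= expr0n addr0 sqrtr_sqr ger0_norm. Qed.

Lemma normc_natr n : normc (n%:R : C) = n%:R.
Proof. by rewrite -(rmorph_nat (real_complex R)) normc_real ?ler0n. Qed.

Lemma normc_sum (I : Type) (r : seq I) (P : pred I) (F : I -> C) :
  normc (\sum_(i <- r | P i) F i) <= \sum_(i <- r | P i) normc (F i).
Proof.
elim/big_ind2: _ => [|x1 x2 y1 y2 h1 h2|//]; first by rewrite normc0.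
exact: le_trans (le_normcD _ _) (lerD h1 h2).
Qed.

Lemma cauchy_schwarz (I : finType) (P : pred I) (x y : I -> R) :
  (\sum_(i | P i) x i * y i) ^+ 2 <=
    (\sum_(i | P i) x i ^+ 2) * (\sum_(i | P i) y i ^+ 2).
Proof.
have sq i j : (x i * y j - x j * y i) ^+ 2 =
    x i ^+ 2 * y j ^+ 2 + y i ^+ 2 * x j ^+ 2 - 2 * (x i * y i) * (x j * y j).
  by ring.
have lagrange : \sum_(i | P i) \sum_(j | P j) (x i * y j - x j * y i) ^+ 2 =
    2 * ((\sum_(i | P i) x i ^+ 2) * (\sum_(i | P i) y i ^+ 2)
         - (\sum_(i | P i) x i * y i) ^+ 2).
  under eq_bigr do under eq_bigr do rewrite sq.
  under eq_bigr do rewrite !big_split /= sumrN -!mulr_sumr.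
  by rewrite !big_split /= sumrN -!mulr_suml -mulr_sumr expr2; ring.
rewrite -subr_ge0 -(pmulr_rge0 _ (ltr0Sn _ 1)) -lagrange.
by do 2!apply: sumr_ge0 => ? _; exact: sqr_ge0.
Qed.

Lemma sum_sqrt_mul_le (I : finType) (x y : I -> R) :
  (forall i, 0 <= x i) -> (forall i, 0 <= y i) ->
  \sum_i Num.sqrt (x i) * Num.sqrt (y i) <=
    Num.sqrt (\sum_i x i) * Num.sqrt (\sum_i y i).
Proof.
move=> x0 y0; rewrite -(ler_pXn2r (ltn0Sn 1)) ?nnegrE; last 2 first.
- by rewrite sumr_ge0 // => i _; rewrite mulr_ge0 ?sqrtr_ge0.
- by rewrite mulr_ge0 ?sqrtr_ge0.
rewrite exprMn !sqr_sqrtr ?sumr_ge0 // (le_trans (cauchy_schwarz _ _ _)) //.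
by rewrite (eq_bigr _ (fun i _ => sqr_sqrtr (x0 i))) (eq_bigr _ (fun i _ => sqr_sqrtr (y0 i))).
Qed.

Lemma cauchy_schwarz_normc (I : finType) (P : pred I) (a b : I -> C) :
  normc (\sum_(i | P i) a i * b i) ^+ 2 <=
    (\sum_(i | P i) normc (a i) ^+ 2) * (\sum_(i | P i) normc (b i) ^+ 2).
Proof.
apply: le_trans (cauchy_schwarz P (fun i => normc (a i)) (fun i => normc (b i))).
rewrite ler_pXn2r ?nnegrE ?normc_ge0 ?sumr_ge0 // => [|i _]; last first.
  by rewrite mulr_ge0 ?normc_ge0.
by rewrite (le_trans (normc_sum _ _ _)) // ler_sum // => i _; rewrite normcM.
Qed.

Definition sumsq (I : finType) (f : I -> C) : R := \sum_i normc (f i) ^+ 2.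

Lemma sumsq_ge0 (I : finType) (f : I -> C) : 0 <= sumsq f.
Proof. by apply: sumr_ge0 => i _; rewrite sqr_ge0. Qed.

Definition autocorr (V : finZmodType) (h : V -> C) (d : V) : R :=
  \sum_u normc (h u) ^+ 2 * normc (h (u - d)) ^+ 2.

Lemma sum_autocorr (V : finZmodType) (h : V -> C) :
  \sum_d autocorr h d = sumsq h ^+ 2.
Proof.
rewrite exchange_big expr2 mulr_suml; apply: eq_bigr => u _.
by rewrite -mulr_sumr (reindex_inj (subrI u)); under eq_bigr do rewrite subKr.
Qed.

Lemma sumsq_convolution (V : finZmodType) (g : V -> V -> C) :
  (\sum_z normc (\sum_x g (z - x) x) ^+ 2)%:C =
    \sum_d \sum_u \sum_x g u x * conjc (g (u - d) (x + d)).
Proof.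
rewrite rmorph_sum /=; under eq_bigr do rewrite sqr_normc rmorph_sum big_distrlr /=.
under eq_bigr do under eq_bigr => x _ do rewrite (reindex_inj (addrI x)).
under eq_bigr do rewrite exchange_big.
rewrite exchange_big; apply: eq_bigr => d _ /=.
rewrite exchange_big [RHS]exchange_big; apply: eq_bigr => x _ /=.
rewrite (reindex_inj (addIr x)); apply: eq_bigr => u _ /=.
by rewrite addrK opprD addrA addrK.
Qed.

End ComplexSums.

Lemma additive_character_exists (R : rcfType) (p : nat) : prime p ->
  exists psi : 'F_p -> R[i],
    [/\ {morph psi : x y / x + y >-> x * y}, psi 0 = 1 & psi 1 != 1].
Proof.
move=> p_pr; have p_gt1 := prime_gt1 p_pr.
have p1_gt0 : (0 < p.-1)%N by rewrite ltn_predRL.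
(* a root of 1 + X + ... + X^(p-1), i.e. a primitive p-th root of unity *)
have [w w_root] := @solve_monicpoly R[i] p.-1 (fun _ => -1) p1_gt0.
have sum_w : \sum_(i < p) w ^+ i = 0.
  rewrite -(prednK (ltnW p_gt1)) big_ord_recr /= w_root -big_split /=.
  by rewrite big1 // => i _; rewrite mulN1r subrr.
have w_p : w ^+ (Zp_trunc (pdiv p)).+2 = 1.
  by rewrite Fp_cast //; apply/eqP; rewrite -subr_eq0 subrX1 sum_w mulr0.
exists (fun x : 'F_p => w ^+ x); split => [x y /=|//|/=].
- by rewrite (expr_mod _ w_p) exprD.
- rewrite modn_small // expr1; apply/eqP => w1; move: sum_w; rewrite w1.
  under eq_bigr do rewrite expr1n.
  by rewrite sumr_const card_ord => /eqP; rewrite pnatr_eq0 gtn_eqF // ltnW.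
Qed.

Section Fourier.
Variables (R : rcfType) (p : nat) (psi : 'F_p -> R[i]).
Hypothesis p_pr : prime p.
Hypothesis psiD : {morph psi : x y / x + y >-> x * y}.
Hypothesis psi0 : psi 0 = 1.
Hypothesis psi1 : psi 1 != 1.
Local Notation C := R[i].
Local Notation F := 'F_p.

Lemma psiMn (x : F) n : psi (x *+ n) = psi x ^+ n.
Proof. by elim: n => [|n IHn]; rewrite ?mulr0n ?psi0 // mulrS psiD IHn exprS. Qed.

Lemma normc_psi x : normc (psi x) = 1.
Proof.
have normcX z n : normc (z ^+ n) = normc z ^+ n.
  by elim: n => [|n IHn]; rewrite ?normc1 // !exprS normcM IHn.
have psiXp : psi x ^+ p = 1.
  by rewrite -psiMn -mulr_natr (pcharf0 (pchar_Fp p_pr)) mulr0 psi0.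
apply/eqP; rewrite -(pexpr_eq1 (prime_gt0 p_pr)) ?normc_ge0 //.
by rewrite -normcX psiXp normc1.
Qed.

Lemma conjc_psi x : conjc (psi x) = psi (- x).
Proof.
have unit_psi : psi x * conjc (psi x) = 1 by rewrite -sqr_normc normc_psi expr1n.
by rewrite -[LHS]mul1r -psi0 -(subrr x) psiD mulrAC unit_psi mul1r.
Qed.

Lemma sum_psi : \sum_x psi x = 0.
Proof.
have : \sum_x psi x = psi 1 * \sum_x psi x.
  by rewrite mulr_sumr (reindex_inj (addrI 1)); apply: eq_bigr => x _; rewrite psiD.
move/eqP; rewrite -subr_eq0 -{1}[\sum_x _]mul1r -mulrBl mulf_eq0 subr_eq0.
by rewrite eq_sym (negPf psi1) => /eqP.
Qed.

Lemma sum_psiM (a : F) : \sum_x psi (x * a) = if a == 0 then p%:R else 0.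
Proof.
have [->|a0] := eqVneq a 0.
  by under eq_bigr do rewrite mulr0 psi0; rewrite sumr_const card_Fp.
by rewrite -[RHS]sum_psi [RHS](reindex_inj (mulIf a0)).
Qed.

Lemma sum_psiMB (a b : F) :
  \sum_x psi (x * a - x * b) = if a == b then p%:R else 0.
Proof. by under eq_bigr do rewrite -mulrBr; rewrite sum_psiM subr_eq0. Qed.

Lemma natr_Fp_neq0 : p%:R != 0 :> C.
Proof. by rewrite pnatr_eq0 -lt0n prime_gt0. Qed.

Definition fourier (f : F -> C) (xi : F) : C :=
  p%:R^-1 * \sum_x f x * psi (- (xi * x)).

Definition fourier_series (c : F -> C) (x : F) : C := \sum_xi c xi * psi (xi * x).

Lemma fourier_inversion (f : F -> C) : fourier_series (fourier f) =1 f.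
Proof.
move=> x; rewrite /fourier_series /fourier.
under eq_bigr do rewrite -mulrA mulr_suml.
rewrite -mulr_sumr exchange_big /=.
under eq_bigr => y _.
  under eq_bigr do rewrite -mulrA -psiD addrC.
  rewrite -mulr_sumr sum_psiMB.
  over.
rewrite /= (bigD1 x) //= eqxx big1 ?addr0 => [|y yx]; last first.
  by rewrite eq_sym (negPf yx) mulr0.
by rewrite mulrCA mulVf ?mulr1 ?natr_Fp_neq0.
Qed.

Lemma sumsq_fourier_series (c : F -> C) :
  p%:R^-1 * sumsq (fourier_series c) = sumsq c.
Proof.
apply: (@complexI R); rewrite rmorphM fmorphV rmorph_nat !rmorph_sum /=.
have expand x z z' : c z * psi (z * x) * conjc (c z' * psi (z' * x)) =
    c z * conjc (c z') * psi (x * z - x * z').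
  by rewrite rmorphM /= conjc_psi mulrACA -psiD !(mulrC x).
under eq_bigr do rewrite sqr_normc rmorph_sum big_distrlr /=.
under eq_bigr do under eq_bigr do under eq_bigr do rewrite expand.
rewrite exchange_big mulr_sumr; apply: eq_bigr => z _ /=.
rewrite exchange_big; under eq_bigr do rewrite -mulr_sumr sum_psiMB.
rewrite /= (bigD1 z) //= eqxx big1 ?addr0 => [|z' z'z]; last first.
  by rewrite eq_sym (negPf z'z) mulr0.
by rewrite -sqr_normc mulrCA mulVf ?mulr1 ?natr_Fp_neq0.
Qed.

Lemma sumsq_fourier (f : F -> C) : sumsq (fourier f) = p%:R^-1 * sumsq f.
Proof.
rewrite -sumsq_fourier_series; congr (_ * _).
by apply: eq_bigr => x _; rewrite fourier_inversion.
Qed.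

Definition gauss_avg (a b : F) : C := p%:R^-1 * \sum_u psi (a * u ^+ 2 + b * u).

Lemma normc_gauss_avg_le1 a b : normc (gauss_avg a b) <= 1.
Proof.
rewrite /gauss_avg normcM normcV normc_natr.
rewrite ler_pdivrMl ?ltr0n ?prime_gt0 // mulr1 (le_trans (normc_sum _ _ _)) //.
by under eq_bigr do rewrite normc_psi; rewrite sumr_const card_Fp.
Qed.

Definition conv_gauss (A B : F -> C) (z : F) : C :=
  \sum_x A (z - x) * B x * gauss_avg x (z - x).

Lemma sumsq_conv_gauss_le (A B : F -> C) :
  sumsq (conv_gauss A B) <= p%:R * (sumsq A * sumsq B).
Proof.
have pointwise z : normc (conv_gauss A B z) ^+ 2 <= sumsq A * sumsq B.
  rewrite /conv_gauss; under eq_bigr do rewrite -mulrA.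
  apply: le_trans (cauchy_schwarz_normc _ _ _) _.
  rewrite ler_pM ?sumr_ge0 // => [x _|x _||]; rewrite ?sqr_ge0 //.
    by rewrite (reindex_inj (subrI z)); under eq_bigr do rewrite subKr.
  apply: ler_sum => x _; rewrite normcM exprMn ler_piMr ?sqr_ge0 //.
  by rewrite expr_le1 ?normc_ge0 ?normc_gauss_avg_le1.
rewrite (le_trans (ler_sum _ (fun z _ => pointwise z))) //.
by rewrite sumr_const card_Fp // mulr_natl.
Qed.

Section OddCharacteristic.
Hypothesis p_neq2 : p != 2.

Lemma two_Fp_neq0 : (2 : F) != 0.
Proof.
rewrite -(dvdn_pcharf (pchar_Fp p_pr)); apply: contra p_neq2 => /(dvdn_leq (ltn0Sn 1)).
by rewrite eqn_leq (prime_gt1 p_pr) andbT.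
Qed.

Lemma four_Fp_neq0 : (4 : F) != 0.
Proof. by rewrite (_ : 4 = 2 * 2) ?mulf_neq0 ?two_Fp_neq0 //; ring. Qed.

Lemma gauss_avg_complete_sq a b : a != 0 ->
  gauss_avg a b = psi (- (b ^+ 2 / (4 * a))) * gauss_avg a 0.
Proof.
move=> a0; rewrite /gauss_avg mulrCA; congr (_ * _).
rewrite mulr_sumr (reindex_inj (addIr (- (b / (2 * a))))).
apply: eq_bigr => u _; rewrite -psiD; congr psi.
by field; rewrite a0 two_Fp_neq0 four_Fp_neq0.
Qed.

Lemma normc_gauss_avg_sq a b :
  normc (gauss_avg a b) ^+ 2 = if a != 0 then p%:R^-1 else (b == 0)%:R.
Proof.
have expand v h : psi (a * (h + v) ^+ 2 + b * (h + v)) * conjc (psi (a * v ^+ 2 + b * v))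
    = psi (a * h ^+ 2 + b * h) * psi (v * (2 * a * h)).
  by rewrite conjc_psi -!psiD; congr psi; ring.
apply: (@complexI R); rewrite sqr_normc rmorphM rmorph_sum fmorphV rmorph_nat /=.
rewrite mulrACA big_distrlr exchange_big /=.
under eq_bigr => v _ do rewrite (reindex_inj (addIr v)) /=.
under eq_bigr do under eq_bigr do rewrite expand.
rewrite exchange_big /=; under eq_bigr do rewrite -mulr_sumr sum_psiM.
have [->|a0] /= := eqVneq a 0.
  under eq_bigr do rewrite mulr0 !mul0r add0r eqxx (mulrC b).
  rewrite -mulr_suml sum_psiM; case: (b == 0); last by rewrite mul0r mulr0 rmorph0.
  by rewrite rmorph1 mulrACA !mulVf ?mulr1 ?natr_Fp_neq0.
rewrite (bigD1 0) //= big1 ?addr0 => [|h h0]; last first.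
  by rewrite !mulf_eq0 (negPf two_Fp_neq0) (negPf a0) (negPf h0) mulr0.
rewrite expr0n /= !mulr0 add0r psi0 mul1r fmorphV rmorph_nat.
by rewrite -mulrA mulVf ?mulr1 ?natr_Fp_neq0.
Qed.

Definition shift_prod (d u x : F) : C :=
  gauss_avg x u * conjc (gauss_avg (x + d) (u - d)).

Definition shift_gram (d x y : F) : C :=
  \sum_u shift_prod d u x * conjc (shift_prod d u y).

Lemma shift_prod_complete_sq (d u x : F) : x != 0 -> x + d != 0 ->
  shift_prod d u x = gauss_avg x 0 * conjc (gauss_avg (x + d) 0) *
    psi ((u - d) ^+ 2 / (4 * (x + d)) - u ^+ 2 / (4 * x)).
Proof.
move=> x0 xd0; rewrite /shift_prod (gauss_avg_complete_sq u x0).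
rewrite (gauss_avg_complete_sq (u - d) xd0) rmorphM /= conjc_psi opprK.
by rewrite mulrACA [LHS]mulrC -psiD (addrC (- _)).
Qed.

Lemma normc_shift_gram_sq (d x y : F) : d != 0 ->
  x != 0 -> x + d != 0 -> y != 0 -> y + d != 0 ->
  normc (shift_gram d x y) ^+ 2 <= p%:R ^- 3 + (x == y)%:R * p%:R ^- 2.
Proof.
move=> d0 x0 xd0 y0 yd0.
set a := (4 * x)^-1; set a' := (4 * (x + d))^-1.
set b := (4 * y)^-1; set b' := (4 * (y + d))^-1.
set ga := a' - a + b - b'; set be := 2 * d * (b' - a').
set ka := gauss_avg x 0 * conjc (gauss_avg (x + d) 0) *
  conjc (gauss_avg y 0 * conjc (gauss_avg (y + d) 0)).
(* completing the four squares leaves one Gauss sum in u *)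
have gram : shift_gram d x y =
    ka * psi ((a' - b') * d ^+ 2) * (p%:R * gauss_avg ga be).
  rewrite /gauss_avg mulVKf ?natr_Fp_neq0 // mulr_sumr.
  apply: eq_bigr => u _; rewrite !shift_prod_complete_sq //.
  rewrite [conjc (_ * psi _)]rmorphM /= conjc_psi.
  rewrite [LHS]mulrACA -psiD -[RHS]mulrA -psiD; congr (_ * psi _).
  by rewrite /ga /be /a /a' /b /b'; ring.
have normc_ka : normc ka ^+ 2 = p%:R ^- 4.
  have normc_g0 z : z != 0 -> normc (gauss_avg z 0) ^+ 2 = p%:R^-1.
    by move=> z0; rewrite normc_gauss_avg_sq z0.
  rewrite /ka normcM normcM !normc_conj normcM normc_conj !exprMn !normc_g0 //.
  by rewrite -!invfM; congr _^-1; ring.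
clearbody ka.
rewrite gram normcM normcM normcM normc_psi mulr1 normc_natr !exprMn normc_ka.
have p0 : (p%:R : R) != 0 by rewrite pnatr_eq0 -lt0n prime_gt0.
have le_xy : (be == 0)%:R <= (x == y)%:R :> R.
  have [be0|] := eqVneq be 0; last by rewrite ler0n.
  suff -> : x == y by [].
  move: be0 => /eqP; rewrite /be !mulf_eq0 (negPf two_Fp_neq0) (negPf d0) /= subr_eq0.
  by move=> /eqP /invr_inj /(mulfI four_Fp_neq0) /addIr ->.
rewrite normc_gauss_avg_sq mulrA (_ : p%:R ^- 4 * p%:R ^+ 2 = p%:R ^- 2); last first.
  by field.
case: ifP => _.
  rewrite (_ : p%:R ^- 2 * p%:R^-1 = p%:R ^- 3); last by field.
  by rewrite lerDl mulr_ge0 ?ler0n ?invr_ge0 ?exprn_ge0.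
by rewrite mulrC ler_wpDl ?invr_ge0 ?exprn_ge0 // ler_wpM2r ?invr_ge0 ?exprn_ge0.
Qed.

Definition shift_support (d x : F) : bool := (x != 0) && (x + d != 0).

Lemma sum_normc_shift_gram_sq d : d != 0 ->
  \sum_(q : F * F | shift_support d q.1 && shift_support d q.2)
    normc (shift_gram d q.1 q.2) ^+ 2 <= 2 * p%:R^-1.
Proof.
move=> d0; have p0 : (p%:R : R) != 0 by rewrite pnatr_eq0 -lt0n prime_gt0.
apply: le_trans (_ : \sum_(q : F * F) (p%:R ^- 3 + (q.1 == q.2)%:R * p%:R ^- 2) <= _).
  rewrite big_mkcond /=; apply: ler_sum => -[x y] _ /=.
  case: ifP => [/andP[/andP[x0 xd0] /andP[y0 yd0]]|_]; first exact: normc_shift_gram_sq.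
  by rewrite addr_ge0 ?mulr_ge0 ?ler0n ?invr_ge0 ?exprn_ge0.
rewrite -(pair_bigA _ (fun x y => p%:R ^- 3 + (x == y)%:R * p%:R ^- 2)) /=.
under eq_bigr => x _.
  rewrite big_split /= sumr_const card_Fp // (bigD1 x) //= eqxx big1 ?addr0.
    over.
  by move=> y; rewrite eq_sym => /negPf ->; rewrite mul0r.
rewrite sumr_const card_Fp //=.
suff -> : (p%:R ^- 3 *+ p + 1 / p%:R ^+ 2) *+ p = 2 / p%:R :> R by [].
by rewrite -(mulr_natr (p%:R ^- 3)) -(mulr_natr (_ + _)); field.
Qed.

Section Correlation.
Variables A B : F -> C.
Hypothesis B0 : B 0 = 0.

Definition corr_term (d : F) : C := \sum_u \sum_x
  A u * B x * gauss_avg x u * conjc (A (u - d) * B (x + d) * gauss_avg (x + d) (u - d)).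

Definition shift_sum (d u : F) : C :=
  \sum_x B x * conjc (B (x + d)) * shift_prod d u x.

Lemma sumsq_conv_gauss_corr : (sumsq (conv_gauss A B))%:C = \sum_d corr_term d.
Proof.
by rewrite /sumsq /conv_gauss (sumsq_convolution (fun u x => A u * B x * gauss_avg x u)).
Qed.

Lemma normc_corr_term0 : normc (corr_term 0) <= p%:R^-1 * (sumsq A * sumsq B).
Proof.
rewrite /corr_term (le_trans (normc_sum _ _ _)) // big_distrlr mulr_sumr.
apply: ler_sum => u _; rewrite (le_trans (normc_sum _ _ _)) // mulr_sumr.
apply: ler_sum => x _; rewrite subr0 addr0 -sqr_normc normc_real ?sqr_ge0 //.
have [->|x0] := eqVneq x 0; first by rewrite B0 mulr0 mul0r normc0 expr0n /= !mulr0.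
by rewrite normcM normcM !exprMn normc_gauss_avg_sq x0 mulrC mulrA.
Qed.

Lemma corr_term_split d :
  corr_term d = \sum_u A u * conjc (A (u - d)) * shift_sum d u.
Proof.
apply: eq_bigr => u _; rewrite /shift_sum mulr_sumr; apply: eq_bigr => x _.
by rewrite /shift_prod !rmorphM /=; ring.
Qed.

Lemma sumsq_shift_sum d : (sumsq (shift_sum d))%:C = \sum_x \sum_y
  B x * conjc (B (x + d)) * conjc (B y * conjc (B (y + d))) * shift_gram d x y.
Proof.
rewrite rmorph_sum /=; under eq_bigr do rewrite sqr_normc rmorph_sum big_distrlr /=.
rewrite exchange_big; apply: eq_bigr => x _.
rewrite exchange_big; apply: eq_bigr => y _ /=.
rewrite /shift_gram mulr_sumr; apply: eq_bigr => u _.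
by rewrite !rmorphM /=; ring.
Qed.

Lemma sumsq_shift_sum_le d : d != 0 ->
  sumsq (shift_sum d) ^+ 2 <= 2 * p%:R^-1 * autocorr B (- d) ^+ 2.
Proof.
move=> d0; pose beta x := B x * conjc (B (x + d)).
pose P (q : F * F) := shift_support d q.1 && shift_support d q.2.
have beta0 x : ~~ shift_support d x -> beta x = 0.
  rewrite negb_and !negbK => /orP[] /eqP x0; rewrite /beta x0 B0 ?mul0r //.
  by rewrite rmorph0 mulr0.
have off_support q : ~~ P q -> beta q.1 * conjc (beta q.2) = 0.
  by rewrite negb_and => /orP[] /beta0 ->; rewrite ?mul0r ?rmorph0 ?mulr0.
have sumsq_eq : (sumsq (shift_sum d))%:C =
    \sum_(q | P q) beta q.1 * conjc (beta q.2) * shift_gram d q.1 q.2.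
  rewrite sumsq_shift_sum pair_bigA [RHS]big_mkcond; apply: eq_bigr => q _ /=.
  by case: ifPn => // /off_support ->; rewrite mul0r.
have sum_beta2 : \sum_(q | P q) normc (beta q.1 * conjc (beta q.2)) ^+ 2 =
    autocorr B (- d) ^+ 2.
  rewrite big_rmcond => [|q /off_support ->]; last by rewrite normc0 expr0n.
  rewrite -(pair_bigA _ (fun x y => normc (beta x * conjc (beta y)) ^+ 2)) /=.
  rewrite expr2 big_distrlr; apply: eq_bigr => x _; apply: eq_bigr => y _.
  by rewrite normcM normc_conj exprMn /beta !normcM !normc_conj !exprMn opprK.
apply: le_trans (_ : normc ((sumsq (shift_sum d))%:C) ^+ 2 <= _).
  by rewrite normc_real ?sumsq_ge0.
rewrite sumsq_eq (le_trans (cauchy_schwarz_normc _ _ _)) // sum_beta2 mulrC.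
by rewrite ler_wpM2r ?sqr_ge0 // sum_normc_shift_gram_sq.
Qed.

Lemma normc_corr_term_pow4 d : d != 0 ->
  normc (corr_term d) ^+ 4 <= 2 * p%:R^-1 * (autocorr A d ^+ 2 * autocorr B (- d) ^+ 2).
Proof.
move=> d0; have ad_ge0 : 0 <= autocorr A d.
  by apply: sumr_ge0 => u _; rewrite mulr_ge0 ?sqr_ge0.
have cs : normc (corr_term d) ^+ 2 <= autocorr A d * sumsq (shift_sum d).
  rewrite corr_term_split (le_trans (cauchy_schwarz_normc _ _ _)) //.
  rewrite ler_wpM2r ?sumsq_ge0 // le_eqVlt; apply/orP; left; apply/eqP.
  by apply: eq_bigr => u _; rewrite normcM normc_conj exprMn.
rewrite (_ : 4 = 2 * 2)%N // exprM.
apply: le_trans (_ : (autocorr A d * sumsq (shift_sum d)) ^+ 2 <= _).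
  by rewrite ler_pXn2r ?nnegrE ?sqr_ge0 ?mulr_ge0 ?sumsq_ge0.
by rewrite exprMn [X in _ <= X]mulrCA ler_wpM2l ?sqr_ge0 ?sumsq_shift_sum_le.
Qed.

Lemma sumsq_conv_gauss_odd : sumsq (conv_gauss A B) <=
  (p%:R^-1 + Num.sqrt (Num.sqrt (2 * p%:R^-1))) * (sumsq A * sumsq B).
Proof.
pose r : R := Num.sqrt (Num.sqrt (2 * p%:R^-1)).
have autocorr_ge0 (h : F -> C) d : 0 <= autocorr h d.
  by apply: sumr_ge0 => u _; rewrite mulr_ge0 ?sqr_ge0.
have sqrt_pow4 x : 0 <= x -> Num.sqrt x ^+ 4 = x ^+ 2.
  by move=> x0; rewrite (_ : 4 = 2 * 2)%N // exprM sqr_sqrtr.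
have corr_le (d : F) : d != 0 ->
    normc (corr_term d) <= r * (Num.sqrt (autocorr A d) * Num.sqrt (autocorr B (- d))).
  move=> d0; rewrite -(ler_pXn2r (isT : (0 < 4)%N)) ?nnegrE ?normc_ge0 //; last first.
    by rewrite mulr_ge0 ?mulr_ge0 ?sqrtr_ge0.
  rewrite (le_trans (normc_corr_term_pow4 d0)) // !exprMn !sqrt_pow4 ?sqrtr_ge0 //.
  by rewrite sqr_sqrtr // mulr_ge0 ?invr_ge0 ?ler0n.
apply: le_trans (_ : normc (\sum_d corr_term d) <= _).
  by rewrite -sumsq_conv_gauss_corr normc_real ?sumsq_ge0.
rewrite (le_trans (normc_sum _ _ _)) // (bigD1 0) //= mulrDl lerD ?normc_corr_term0 //.
rewrite (le_trans (ler_sum _ corr_le)) // -mulr_sumr ler_wpM2l ?sqrtr_ge0 //.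
apply: le_trans (_ : \sum_d Num.sqrt (autocorr A d) * Num.sqrt (autocorr B (- d)) <= _).
  by rewrite [X in _ <= X](bigD1 0) //= lerDr mulr_ge0 ?sqrtr_ge0.
rewrite (le_trans (sum_sqrt_mul_le (autocorr_ge0 A) (fun d => autocorr_ge0 B (- d)))) //
  [X in _ * Num.sqrt X](reindex_inj oppr_inj) /=.
under [X in _ * Num.sqrt X]eq_bigr do rewrite opprK.
by rewrite !sum_autocorr !sqrtr_sqr !ger0_norm ?sumsq_ge0.
Qed.

End Correlation.

End OddCharacteristic.

End Fourier.

Lemma Fop_sub_expect (R : realType) (p : nat) (f1 f2 : 'F_p -> R[i]) x :
  Fop f1 f2 x - expect f1 * expect f2 = Fop f1 (fun t => f2 t - expect f2) x.
Proof.
have mean_shift : p%:R^-1 * \sum_y f1 (x + y) = expect f1.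
  by rewrite /expect [in RHS](reindex_inj (addrI x)).
rewrite /Fop; under [in RHS]eq_bigr do rewrite mulrBr.
by rewrite sumrB mulrBr -mulr_suml [_ * (_ * expect f2)]mulrA mean_shift.
Qed.

Section Constants.
Variable R : realType.

Lemma powR_neg_tenth (x : R) : 1 <= x ->
  [/\ (x `^ (- 10%:R^-1)) ^+ 10 = x^-1, 0 < x `^ (- 10%:R^-1)
    & x `^ (- 10%:R^-1) <= 1].
Proof.
move=> x1; have x0 : 0 < x by apply: lt_le_trans x1.
split; [|exact: powR_gt0|].
- rewrite -powR_mulrn ?powR_ge0 // -powRrM mulNr mulVf ?pnatr_eq0 //.
  by rewrite powR_inv1 // ltW.
- by rewrite -[leRHS](powRr0 x) ler_powR // oppr_le0 invr_ge0 ler0n.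
Qed.

Lemma trivial_const_le (n : nat) : (0 < n <= 2)%N ->
  n%:R <= 4 * ((n%:R : R) `^ (- 10%:R^-1)) ^+ 2.
Proof.
case/andP=> n_gt0 n_le2; have n1 : 1 <= n%:R :> R by rewrite ler1n.
have [t10 t_gt0 t_le1] := powR_neg_tenth n1.
set u := _ ^+ 2; have u_ge0 : 0 <= u by rewrite exprn_ge0 // ltW.
have u5 : u ^+ 5 = n%:R^-1 by rewrite -exprM.
have u_le1 : u <= 1 by rewrite exprn_ile1 // ltW.
have u5_le : u ^+ 5 <= u by rewrite ler_iXnr.
apply: (@le_trans _ _ (4 / n%:R)); last by rewrite ler_wpM2l // -u5.
rewrite ler_pdivlMr ?ltr0n // -natrM ler_nat; exact: (leq_mul n_le2 n_le2).
Qed.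

Lemma gauss_const_le (n : nat) : (0 < n)%N ->
  n%:R^-1 + Num.sqrt (Num.sqrt (2 * n%:R^-1)) <= 4 * ((n%:R : R) `^ (- 10%:R^-1)) ^+ 2.
Proof.
move=> n_gt0; have n1 : 1 <= n%:R :> R by rewrite ler1n.
have [t10 t_gt0 t_le1] := powR_neg_tenth n1.
set u := _ ^+ 2; have u_ge0 : 0 <= u by rewrite exprn_ge0 // ltW.
have u_le1 : u <= 1 by rewrite exprn_ile1 // ltW.
have u5 : u ^+ 5 = n%:R^-1 by rewrite -exprM.
rewrite -u5.
have root4_le : Num.sqrt (Num.sqrt (2 * u ^+ 5)) <= 2 * u.
  rewrite -(ler_pXn2r (isT : (0 < 4)%N)) ?nnegrE ?sqrtr_ge0 ?mulr_ge0 ?exprn_ge0 ?powR_ge0 //.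
  rewrite (_ : 4 = 2 * 2)%N // exprM !sqr_sqrtr ?sqrtr_ge0 ?mulr_ge0 ?exprn_ge0 ?powR_ge0 //.
  have := exprn_ge0 4 u_ge0; nra.
have := ler_iXnr (isT : (0 < 5)%N) u_ge0 u_le1; lra.
Qed.

End Constants.

Section MeanSquare.
Variables (R : realType) (p : nat) (psi : 'F_p -> R[i]).
Hypothesis p_pr : prime p.
Hypothesis psiD : {morph psi : x y / x + y >-> x * y}.
Hypothesis psi0 : psi 0 = 1.
Hypothesis psi1 : psi 1 != 1.
Local Notation F := 'F_p.
Local Notation C := R[i].
Local Notation inversion := (fourier_inversion p_pr psiD psi0 psi1).
Local Notation parseval := (sumsq_fourier p_pr psiD psi0 psi1).

Lemma Fop_fourier (f1 f2 : F -> C) x : Fop f1 f2 x =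
  fourier_series psi (conv_gauss psi (fourier psi f1) (fourier psi f2)) x.
Proof.
pose A := fourier psi f1; pose B := fourier psi f2.
have term (a b : C) xi eta y : a * psi (xi * (x + y)) * (b * psi (eta * (x + y ^+ 2))) =
    a * b * psi ((xi + eta) * x) * psi (eta * y ^+ 2 + xi * y).
  by rewrite mulrACA -psiD -[RHS]mulrA -psiD; congr (_ * psi _); ring.
transitivity (\sum_xi \sum_eta A xi * B eta * gauss_avg psi eta xi * psi ((xi + eta) * x)).
  rewrite /Fop; under eq_bigr do rewrite -(inversion f1) -(inversion f2) big_distrlr /=.
  rewrite exchange_big; under eq_bigr do rewrite exchange_big.
  rewrite mulr_sumr; apply: eq_bigr => xi _; rewrite mulr_sumr; apply: eq_bigr => eta _.
  under eq_bigr do rewrite term.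
  by rewrite /gauss_avg -mulr_sumr /A /B; ring.
rewrite /fourier_series /conv_gauss; under [RHS]eq_bigr do rewrite mulr_suml.
rewrite exchange_big [RHS]exchange_big; apply: eq_bigr => eta _.
by rewrite [RHS](reindex_inj (addIr eta)); apply: eq_bigr => xi _; rewrite addrK.
Qed.

Lemma fourier_sub_expect (f : F -> C) xi :
  fourier psi (fun x => f x - expect f) xi = if xi == 0 then 0 else fourier psi f xi.
Proof.
have sum_psiN : \sum_x psi (- (xi * x)) = if xi == 0 then p%:R else 0.
  under eq_bigr do rewrite -mulNr mulrC.
  by rewrite (sum_psiM p_pr psiD psi0 psi1) oppr_eq0.
rewrite /fourier; under eq_bigr do rewrite mulrBl.
rewrite sumrB -mulr_sumr sum_psiN mulrBr; case: eqP => [->|_]; last by rewrite !mulr0 subr0.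
under eq_bigr do rewrite mul0r oppr0 psi0 mulr1.
by rewrite mulrCA mulVf ?mulr1 ?subrr ?(natr_Fp_neq0 _ p_pr).
Qed.

Lemma sumsq_fourier_sub_expect (f : F -> C) :
  sumsq (fourier psi (fun x => f x - expect f)) <= p%:R^-1 * sumsq f.
Proof.
rewrite -parseval; apply: ler_sum => xi _; rewrite fourier_sub_expect.
by case: eqP => _; rewrite ?normc0 ?expr0n ?sqr_ge0.
Qed.

Lemma mean_sq_Fop_sub_expect (f1 f2 : F -> C) :
  p%:R^-1 * sumsq (fun x => Fop f1 f2 x - expect f1 * expect f2) =
  sumsq (conv_gauss psi (fourier psi f1) (fourier psi (fun x => f2 x - expect f2))).
Proof.
rewrite -(sumsq_fourier_series p_pr psiD psi0 psi1 (conv_gauss _ _ _)); congr (_ * _).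
by apply: eq_bigr => x _; rewrite Fop_sub_expect Fop_fourier.
Qed.

Lemma mean_sq_Fop_le (f1 f2 : F -> C) :
  p%:R^-1 * sumsq (fun x => Fop f1 f2 x - expect f1 * expect f2) <=
  p%:R * (p%:R^-1 * sumsq f1 * (p%:R^-1 * sumsq f2)).
Proof.
rewrite mean_sq_Fop_sub_expect (le_trans (sumsq_conv_gauss_le p_pr psiD psi0 _ _)) //.
rewrite (parseval f1) ler_wpM2l ?ler0n // ler_wpM2l ?sumsq_fourier_sub_expect //.
by rewrite mulr_ge0 ?invr_ge0 ?ler0n ?sumsq_ge0.
Qed.

Lemma mean_sq_Fop_le_odd (f1 f2 : F -> C) : p != 2 ->
  p%:R^-1 * sumsq (fun x => Fop f1 f2 x - expect f1 * expect f2) <=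
  (p%:R^-1 + Num.sqrt (Num.sqrt (2 * p%:R^-1))) *
    (p%:R^-1 * sumsq f1 * (p%:R^-1 * sumsq f2)).
Proof.
move=> p_neq2; rewrite mean_sq_Fop_sub_expect.
rewrite (le_trans (sumsq_conv_gauss_odd p_pr psiD psi0 psi1 p_neq2 _ _)) //.
  by rewrite fourier_sub_expect eqxx.
rewrite (parseval f1) ler_wpM2l ?addr_ge0 ?sqrtr_ge0 ?invr_ge0 ?ler0n //.
by rewrite ler_wpM2l ?sumsq_fourier_sub_expect ?mulr_ge0 ?invr_ge0 ?ler0n ?sumsq_ge0.
Qed.

Lemma mean_sq_Fop_le_powR (f1 f2 : F -> C) :
  p%:R^-1 * sumsq (fun x => Fop f1 f2 x - expect f1 * expect f2) <=
  4 * ((p%:R : R) `^ (- 10%:R^-1)) ^+ 2 * (p%:R^-1 * sumsq f1 * (p%:R^-1 * sumsq f2)).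
Proof.
have mean_sq_ge0 : 0 <= p%:R^-1 * sumsq f1 * (p%:R^-1 * sumsq f2) :> R.
  by rewrite !mulr_ge0 ?invr_ge0 ?ler0n ?sumsq_ge0.
have [p2|p_neq2] := eqVneq p 2.
  rewrite (le_trans (mean_sq_Fop_le _ _)) // ler_wpM2r //.
  by rewrite trivial_const_le // p2.
rewrite (le_trans (mean_sq_Fop_le_odd _ _ p_neq2)) // ler_wpM2r //.
by rewrite gauss_const_le // prime_gt0.
Qed.

End MeanSquare.

Theorem theorem1p1 (R : realType) :
  exists c : R, 0 < c /\
  forall (p : nat), prime p -> forall (f1 f2 : 'F_p -> R[i]),
    l2norm (fun x => Fop f1 f2 x - expect f1 * expect f2)
      <= c * ((p%:R : R) `^ (- (10%:R)^-1)) * l2norm f1 * l2norm f2.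
Proof.
exists 2; split => // p p_pr f1 f2.
have [psi [psiD psi0 psi1]] := additive_character_exists R p_pr.
have mean_sq_le := mean_sq_Fop_le_powR p_pr psiD psi0 psi1 f1 f2.
set t := _ `^ _ in mean_sq_le *; have t_ge0 : 0 <= t := powR_ge0 _ _.
rewrite /l2norm -mulrA -[2 * t]ger0_norm ?mulr_ge0 // -sqrtr_sqr.
rewrite -!sqrtrM ?sqr_ge0 ?mulr_ge0 ?invr_ge0 ?ler0n ?sumsq_ge0 //.
by rewrite ler_sqrt ?sqr_ge0 ?mulr_ge0 ?invr_ge0 ?ler0n ?sumsq_ge0 // exprMn -natrX.
Qed.
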